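(* Consider the setting and framework in the context with $\alpha_k=\frac{H+1}{H+k}$, and with policies generated by projected gradient descent-ascent: fix $\eta>0$, let $\mu_h^0(\cdot|s)$ and $\nu_h^0(\cdot|s)$ be uniform, and for $k\ge1$, $h\in[H]$, $s\in\mathcal S$, $$\mu_h^k(\cdot|s)=\mathcal P_{\Delta_{\mathcal A}}\Big(\mu_h^{k-1}(\cdot|s)+\eta\sum_b\nu_h^{k-1}(b|s)Q_h^{k-1}(s,\cdot,b)\Big),\quad \nu_h^k(\cdot|s)=\mathcal P_{\Delta_{\mathcal B}}\Big(\nu_h^{k-1}(\cdot|s)-\eta\sum_a\mu_h^{k-1}(a|s)Q_h^{k-1}(s,a,\cdot)\Big),$$ where $\mathcal P$ denotes Euclidean projection (these policies at step $h$, round $k$ are computed before $Q_h^k$). Then for all $k\ge1$ and $h\in[H]$, $$\mathrm{reg}_h^k\le\frac{2}{\eta}\cdot\frac{H+1}{H+k}+\frac{\eta\max\{A,B\}H^2}{2},$$ and, with uniform weights $\beta_k^t=1/k$, $$\overline{\mathrm{reg}}_h^k\le\frac{4}{\eta k}+\frac{\eta(A+B)H^2}{2}.$$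
   Context: Setting. A finite-horizon two-player zero-sum Markov game with finite state set $\mathcal S$, finite action sets $\mathcal A$ (max-player, $A=|\mathcal A|$) and $\mathcal B$ (min-player, $B=|\mathcal B|$), horizon $H\ge 1$, reward functions $r_h:\mathcal S\times\mathcal A\times\mathcal B\to[0,1]$ and transition kernels $\mathbb P_h(\cdot\mid s,a,b)$ on $\mathcal S$, $h\in[H]$. For $Q:\mathcal A\times\mathcal B\to\mathbb R$, $x\in\Delta_{\mathcal A}$, $y\in\Delta_{\mathcal B}$, write $\langle Q,x\times y\rangle=\sum_{a,b}x(a)y(b)Q(a,b)$. Framework. Given learning rates $\alpha_k\in(0,1]$ ($k\ge1$) with $\alpha_1=1$ and Markov policies $\mu_h^k(\cdot\mid s)\in\Delta_{\mathcal A}$, $\nu_h^k(\cdot\mid s)\in\Delta_{\mathcal B}$ ($k\ge1$, $h\in[H]$, $s\in\mathcal S$), define $Q_{H+1}^k\equiv 0$ for all $k$, $Q_h^0\equiv H-h+1$, and for $k\ge1$, $h=H,\dots,1$: $$Q_h^k(s,a,b)=(1-\alpha_k)Q_h^{k-1}(s,a,b)+\alpha_k\Big(r_h(s,a,b)+\sum_{s'}\mathbb P_h(s'\mid s,a,b)\langle Q_{h+1}^k(s',\cdot,\cdot),\mu_{h+1}^k(\cdot\mid s')\times\nu_{h+1}^k(\cdot\mid s')\rangle\Big)$$ (for $h=H$ the inner product term is $0$). Let $\alpha_k^t=\alpha_t\prod_{j=t+1}^k(1-\alpha_j)$ for $1\le t\le k$. Weighted regrets: for $h\in[H]$, $\mathrm{reg}_{h,\mu}^k(s)=\max_{z\in\Delta_{\mathcal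 A}}\sum_{t=1}^k\alpha_k^t\langle Q_h^t(s,\cdot,\cdot),z\times\nu_h^t(\cdot|s)\rangle-\sum_{t=1}^k\alpha_k^t\langle Q_h^t(s,\cdot,\cdot),\mu_h^t(\cdot|s)\times\nu_h^t(\cdot|s)\rangle$, $\mathrm{reg}_{h,\nu}^k(s)=\sum_{t=1}^k\alpha_k^t\langle Q_h^t(s,\cdot,\cdot),\mu_h^t(\cdot|s)\times\nu_h^t(\cdot|s)\rangle-\min_{z\in\Delta_{\mathcal B}}\sum_{t=1}^k\alpha_k^t\langle Q_h^t(s,\cdot,\cdot),\mu_h^t(\cdot|s)\times z\rangle$, $\mathrm{reg}_h^k=\max_{s}\max\{\mathrm{reg}_{h,\mu}^k(s),\mathrm{reg}_{h,\nu}^k(s)\}$. Given weights $\beta_k^t\ge0$ with $\sum_{t=1}^k\beta_k^t=1$, define $\overline{\mathrm{reg}}_{h,\mu}^k(s),\overline{\mathrm{reg}}_{h,\nu}^k(s)$ exactly as $\mathrm{reg}_{h,\mu}^k(s),\mathrm{reg}_{h,\nu}^k(s)$ but with $\alpha_k^t$ replaced by $\beta_k^t$, and $\overline{\mathrm{reg}}_h^k=\max_s\big(\overline{\mathrm{reg}}_{h,\mu}^k(s)+\overline{\mathrm{reg}}_{h,\nu}^k(s)\big)$. *)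

From HB Require Import structures.
From mathcomp Require Import all_boot all_order all_algebra.
From mathcomp Require Import reals.
Set Implicit Arguments. Unset Strict Implicit. Unset Printing Implicit Defensive.
Import Order.TTheory GRing.Theory Num.Theory.
Local Open Scope ring_scope.

Section MG.
Variables (R : realType) (S A B : finType) (H : nat).

Definition is_dist (T : finType) (x : T -> R) : Prop :=
  (forall a, 0 <= x a) /\ \sum_a x a = 1.

Definition is_proj (T : finType) (v x : T -> R) : Prop :=
  is_dist x /\
  forall z : T -> R, is_dist z ->
    \sum_a (x a - v a) ^+ 2 <= \sum_a (z a - v a) ^+ 2.

Definition ip (Q : A -> B -> R) (x : A -> R) (y : B -> R) : R :=
  \sum_a \sum_b x a * y b * Q a b.

Definition alpha (k : nat) : R := (H.+1)%:R / (H + k)%:R.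

Definition alpha_w (k t : nat) : R :=
  alpha t * \prod_(t.+1 <= j < k.+1) (1 - alpha j).

Variables (r : nat -> S -> A -> B -> R) (P : nat -> S -> A -> B -> S -> R).
(* policies: mu k h s a = mu_h^k(a|s), nu k h s b = nu_h^k(b|s) *)
Variables (mu : nat -> nat -> S -> A -> R) (nu : nat -> nat -> S -> B -> R).

(* Given Qprev = Q^{k-1}, Qaux k Qprev d is Q_h^k with h = H + 1 - d. *)
Fixpoint Qaux (k : nat) (Qprev : nat -> S -> A -> B -> R) (d : nat)
  : S -> A -> B -> R :=
  match d with
  | 0 => fun _ _ _ => 0
  | d'.+1 => fun s a b =>
      let h := (H - d')%N in
      (1 - alpha k) * Qprev h s a b +
      alpha k * (r h s a b +
        \sum_s' P h s a b s' *
          ip (Qaux k Qprev d' s') (mu k h.+1 s') (nu k h.+1 s'))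
  end.

Fixpoint Qfun (k : nat) : nat -> S -> A -> B -> R :=
  match k with
  | 0 => fun h _ _ _ => (H.+1 - h)%:R
  | k'.+1 => fun h => Qaux k'.+1 (Qfun k') (H.+1 - h)
  end.

(* Weighted regret "gaps" for a fixed comparator z; the regret is the
   maximum of these over z in the simplex. w t = weight of round t. *)
Definition gap_mu (w : nat -> R) (k h : nat) (s : S) (z : A -> R) : R :=
  \sum_(1 <= t < k.+1) w t * ip (Qfun t h s) z (nu t h s)
  - \sum_(1 <= t < k.+1) w t * ip (Qfun t h s) (mu t h s) (nu t h s).

Definition gap_nu (w : nat -> R) (k h : nat) (s : S) (z : B -> R) : R :=
  \sum_(1 <= t < k.+1) w t * ip (Qfun t h s) (mu t h s) (nu t h s)
  - \sum_(1 <= t < k.+1) w t * ip (Qfun t h s) (mu t h s) z.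

End MG.

From HB Require Import structures.
From mathcomp Require Import all_boot all_order all_algebra.
From mathcomp Require Import reals.
From mathcomp Require Import ring lra zify.
Set Implicit Arguments. Unset Strict Implicit. Unset Printing Implicit Defensive.
Import Order.TTheory GRing.Theory Num.Theory.
Local Open Scope ring_scope.

(* At every state and step each player runs projected gradient ascent (resp.
   descent) on the linear payoff [a |-> sum_b nu_t(b) Q^t(a, b)], whose entries
   lie in [0, H]. One projected step gives
     <g_t, z - x_t> <= (|x_t - z|^2 - |x_(t+1) - z|^2) / (2 eta) + eta |g_t|^2 / 2,
   and summing with weights that are nondecreasing in [t] and sum to one
   telescopes, since the squared diameter of the simplex is 2, to
   [w_k / eta + eta |A| H^2 / 2]. Both the weights [alpha_k^t], whose last
   one is [alpha_k], and the uniform weights [1 / k] qualify. *)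

Section SimplexProjection.
Variables (R : realType) (T : finType).
Implicit Types (x y z g : T -> R).

Definition sqdist x z : R := \sum_i (x i - z i) ^+ 2.

Lemma sqdist_ge0 x z : 0 <= sqdist x z.
Proof. by apply: sumr_ge0 => i _; apply: sqr_ge0. Qed.

Lemma is_dist_le1 x i : is_dist x -> x i <= 1.
Proof. by move=> [x0 <-]; rewrite (bigD1 i) //= lerDl sumr_ge0. Qed.

Lemma sqdist_dist_le2 x z : is_dist x -> is_dist z -> sqdist x z <= 2.
Proof.
have sqr_sum_le1 (v : T -> R) : is_dist v -> \sum_i v i ^+ 2 <= 1.
  move=> hv; case: (hv) => v0 v1; rewrite -[leRHS]v1; apply: ler_sum => i _.
  by rewrite expr2 ler_piMr ?v0 //; exact: is_dist_le1.
move=> hx hz; have := sqr_sum_le1 _ hx; have := sqr_sum_le1 _ hz.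
have xz0 : 0 <= \sum_i x i * z i.
  by apply: sumr_ge0 => i _; apply: mulr_ge0; [case: hx | case: hz].
have -> : sqdist x z = \sum_i x i ^+ 2 + \sum_i z i ^+ 2 - 2 * \sum_i x i * z i.
  rewrite mulr_sumr -big_split -sumrB /=; apply: eq_bigr => i _; ring.
lra.
Qed.

Lemma is_dist_segment x z l :
  is_dist x -> is_dist z -> 0 <= l <= 1 -> is_dist (fun i => x i + l * (z i - x i)).
Proof.
move=> [x0 x1] [z0 z1] /andP[l0 l1]; split.
  move=> i; have : 0 <= (1 - l) * x i + l * z i.
    by rewrite addr_ge0 // mulr_ge0 // subr_ge0.
  congr (0 <= _); ring.
by rewrite big_split /= -mulr_sumr sumrB x1 z1 subrr mulr0 addr0.
Qed.

(* If the inner product [a] were negative, moving from [x] towards [z] by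
   [l = -a / (b - a)] in (0, 1] would bring [x] strictly closer to [y]. *)
Lemma is_proj_variational y x z :
  is_proj y x -> is_dist z -> 0 <= \sum_i (x i - y i) * (z i - x i).
Proof.
move=> [hx xmin] hz.
set a := \sum_i _; set b := \sum_i (z i - x i) ^+ 2.
have b0 : 0 <= b by apply: sumr_ge0 => i _; apply: sqr_ge0.
have segment_ge0 l : 0 <= l <= 1 -> 0 <= 2 * l * a + l ^+ 2 * b.
  move=> l01; have := xmin _ (is_dist_segment hx hz l01).
  have -> : \sum_i (x i + l * (z i - x i) - y i) ^+ 2
      = \sum_i (x i - y i) ^+ 2 + (2 * l * a + l ^+ 2 * b).
    rewrite /a /b !mulr_sumr -!big_split /=; apply: eq_bigr => i _; ring.
  by rewrite lerDl.
rewrite leNgt; apply/negP => a_lt0.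
have ba_gt0 : 0 < b - a by lra.
set l := - a / (b - a).
have lE : l * (b - a) = - a by rewrite /l divfK ?gt_eqF.
have l_gt0 : 0 < l by rewrite divr_gt0 // oppr_gt0.
have l_le1 : l <= 1 by rewrite ler_pdivrMr // mul1r; lra.
have := segment_ge0 l; rewrite ltW //= l_le1 => /(_ isT).
have -> : 2 * l * a + l ^+ 2 * b = l * a * (1 + l).
  have lbE : l * b = - a + l * a by rewrite -lE; ring.
  by rewrite (expr2 l) -(mulrA l) lbE; ring.
by rewrite leNgt pmulr_llt0 ?pmulr_rlt0 //; lra.
Qed.

Lemma proj_gradient_step_le y x x' g z (eta : R) :
  0 < eta -> is_proj y x' -> (forall i, y i = x i + eta * g i) -> is_dist z ->
  \sum_i g i * (z i - x i) <=
  (sqdist x z - sqdist x' z) / (2 * eta) + eta / 2 * \sum_i g i ^+ 2.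
Proof.
move=> eta_gt0 hp hy hz.
have vi := is_proj_variational hp hz.
have yx'0 : 0 <= sqdist y x' := sqdist_ge0 y x'.
have E1 : sqdist y z = sqdist y x' + sqdist x' z
    + 2 * \sum_i (x' i - y i) * (z i - x' i).
  rewrite /sqdist mulr_sumr -!big_split /=; apply: eq_bigr => i _; ring.
have E2 : sqdist y z = sqdist x z
    - 2 * eta * \sum_i g i * (z i - x i) + eta ^+ 2 * \sum_i g i ^+ 2.
  rewrite /sqdist !mulr_sumr -sumrB -!big_split /=.
  by apply: eq_bigr => i _; rewrite hy; ring.
rewrite -(ler_pM2l (_ : 0 < 2 * eta)); last lra.
have -> : 2 * eta * ((sqdist x z - sqdist x' z) / (2 * eta)
    + eta / 2 * \sum_i g i ^+ 2)
    = sqdist x z - sqdist x' z + eta ^+ 2 * \sum_i g i ^+ 2.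
  by field; rewrite gt_eqF.
lra.
Qed.

End SimplexProjection.

Definition monotone_weights (R : numDomainType) (w : nat -> R) (k : nat) : Prop :=
  [/\ forall t, (1 <= t <= k)%N -> 0 <= w t,
      forall t, (1 <= t < k)%N -> w t <= w t.+1
    & \sum_(1 <= t < k.+1) w t = 1].

(* Summation by parts: the increments of [w] are nonnegative and multiply
   values of [D] that are at most [c]. *)
Lemma weighted_telescope_le (R : realDomainType) (w D : nat -> R) (c : R) n :
  (1 <= n)%N ->
  (forall t, (1 <= t <= n)%N -> 0 <= w t) ->
  (forall t, (1 <= t < n)%N -> w t <= w t.+1) ->
  (forall t, (1 <= t <= n)%N -> D t <= c) ->
  \sum_(1 <= t < n.+1) w t * (D t - D t.+1) <= w n * (c - D n.+1).
Proof.
case: n => // n _; elim: n => [|n IH] w0 w_mono Dc.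
  by rewrite big_nat1 ler_wpM2l ?w0 // lerD2r Dc.
rewrite big_nat_recr //=.
have IHn : \sum_(1 <= t < n.+2) w t * (D t - D t.+1) <= w n.+1 * (c - D n.+2).
  by apply: IH => t ht; [apply: w0 | apply: w_mono | apply: Dc]; lia.
have w1_ge0 : 0 <= w n.+1 by apply: w0; lia.
have w_le : w n.+1 <= w n.+2 by apply: w_mono; lia.
have D_le : D n.+2 <= c by apply: Dc; lia.
nra.
Qed.

Section WeightedProjectedGradient.
Variables (R : realType) (T : finType).

Lemma weighted_projected_gradient_regret (x y g : nat -> T -> R) (w : nat -> R)
    (eta G : R) (k : nat) (z : T -> R) :
  0 < eta -> (1 <= k)%N -> monotone_weights w k -> is_dist z ->
  (forall t, (1 <= t <= k)%N -> is_dist (x t)) ->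
  (forall t, (1 <= t <= k)%N -> is_proj (y t) (x t.+1)) ->
  (forall t i, (1 <= t <= k)%N -> y t i = x t i + eta * g t i) ->
  (forall t, (1 <= t <= k)%N -> \sum_i g t i ^+ 2 <= G) ->
  \sum_(1 <= t < k.+1) w t * \sum_i g t i * (z i - x t i)
    <= w k / eta + eta * G / 2.
Proof.
move=> eta_gt0 k_ge1 [w0 w_mono w_sum1] hz hx hproj hy hG.
set D := fun t => sqdist (x t) z.
set Q := fun t => \sum_i g t i ^+ 2.
apply: (@le_trans _ _ (\sum_(1 <= t < k.+1)
    w t * ((D t - D t.+1) / (2 * eta) + eta / 2 * Q t))).
  apply: ler_sum_nat => t ht; rewrite ler_wpM2l ?w0 //.
  exact: proj_gradient_step_le eta_gt0 (hproj t ht) (hy t ^~ ht) hz.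
rewrite (_ : \sum_(1 <= t < k.+1) _ =
    (\sum_(1 <= t < k.+1) w t * (D t - D t.+1)) / (2 * eta)
    + eta / 2 * \sum_(1 <= t < k.+1) w t * Q t); last first.
  by rewrite mulr_suml mulr_sumr -big_split /=; apply: eq_bigr => t _; ring.
have telescope : \sum_(1 <= t < k.+1) w t * (D t - D t.+1) <= 2 * w k.
  apply: le_trans (weighted_telescope_le k_ge1 w0 w_mono _) _.
    by move=> t ht; apply: sqdist_dist_le2 => //; apply: hx.
  have := sqdist_ge0 (x k.+1) z; have : 0 <= w k by apply: w0; lia.
  rewrite /D; nra.
have gradient : \sum_(1 <= t < k.+1) w t * Q t <= G.
  rewrite -[G]mul1r -w_sum1 mulr_suml; apply: ler_sum_nat => t ht.
  by rewrite ler_wpM2l ?w0 ?hG.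
have -> : w k / eta + eta * G / 2 = 2 * w k / (2 * eta) + eta / 2 * G.
  by field; rewrite gt_eqF.
rewrite lerD // ?ler_pM2r ?invr_gt0 ?mulr_gt0 //.
by rewrite ler_wpM2l // divr_ge0 // ltW.
Qed.

End WeightedProjectedGradient.

Section LearningRate.
Variables (R : realType) (H : nat).

Lemma alpha_ge0 t : 0 <= alpha R H t.
Proof. by rewrite divr_ge0. Qed.

Lemma alpha_le1 t : (1 <= t)%N -> alpha R H t <= 1.
Proof.
by move=> t_ge1; rewrite ler_pdivrMr ?mul1r ?ler_nat ?ltr0n; lia.
Qed.

Lemma alpha_w_diag k : alpha_w R H k k = alpha R H k.
Proof. by rewrite /alpha_w big_geq // mulr1. Qed.

Lemma prod_one_sub_alpha_ge0 t k : 0 <= \prod_(t.+1 <= j < k) (1 - alpha R H j).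
Proof.
rewrite big_nat_cond; apply: prodr_ge0 => j /andP[/andP[j_gt _] _].
by rewrite subr_ge0 alpha_le1 //; lia.
Qed.

(* [alpha_t (1 - alpha_(t+1)) = alpha_(t+1) (H + t + 1 - (H + 1)) / (H + t)],
   and the last factor is at most one. *)
Lemma alpha_w_nondecr k t : (1 <= t < k)%N -> alpha_w R H k t <= alpha_w R H k t.+1.
Proof.
move=> /andP[t_ge1 t_lt_k]; rewrite /alpha_w big_ltn ?ltnS // mulrA.
rewrite ler_wpM2r ?prod_one_sub_alpha_ge0 // /alpha.
have -> : (H + t.+1)%:R = (H + t)%:R + 1 :> R by rewrite addnS -addn1 natrD.
have a_gt0 : 0 < (H + t)%:R :> R by rewrite ltr0n; lia.
have c_ge1 : 1 <= (H.+1)%:R :> R by rewrite ler1n.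
set a := (H + t)%:R : R; set c := (H.+1)%:R : R.
have -> : c / a * (1 - c / (a + 1)) = c / (a + 1) * ((a + 1 - c) / a).
  by field; apply/andP; split; rewrite gt_eqF //; lra.
by rewrite ler_piMr ?divr_ge0 ?ler_pdivrMr ?mul1r //; lra.
Qed.

Lemma alpha_w_sum1 k : (1 <= k)%N -> \sum_(1 <= t < k.+1) alpha_w R H k t = 1.
Proof.
case: k => // k _; elim: k => [|k IH].
  by rewrite big_nat1 alpha_w_diag /alpha addn1 divff // pnatr_eq0.
rewrite big_nat_recr //= alpha_w_diag.
have -> : \sum_(1 <= t < k.+2) alpha_w R H k.+2 t
    = \sum_(1 <= t < k.+2) alpha_w R H k.+1 t * (1 - alpha R H k.+2).
  apply: eq_big_nat => t ht; rewrite /alpha_w big_nat_recr /=; last by lia.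
  by rewrite mulrA.
by rewrite -mulr_suml IH; ring.
Qed.

Lemma alpha_w_monotone_weights k : (1 <= k)%N -> monotone_weights (alpha_w R H k) k.
Proof.
move=> k_ge1; split; last exact: alpha_w_sum1.
  by move=> t /andP[t_ge1 _]; rewrite mulr_ge0 ?alpha_ge0 ?prod_one_sub_alpha_ge0.
exact: alpha_w_nondecr.
Qed.

End LearningRate.

Lemma uniform_monotone_weights (R : realFieldType) k :
  (1 <= k)%N -> monotone_weights (fun _ => 1 / k%:R : R) k.
Proof.
move=> k_ge1; have k_gt0 : 0 < k%:R :> R by rewrite ltr0n.
split=> [t _ | // | ]; first by rewrite divr_ge0 // ltW.
by rewrite sumr_const_nat subn1 /= -[LHS]mulr_natr mul1r mulVf // gt_eqF.
Qed.

Section InnerProduct.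
Variables (R : realType) (A B : finType).

Lemma ip_sum_l (Q : A -> B -> R) x y : ip Q x y = \sum_a x a * \sum_b y b * Q a b.
Proof.
by apply: eq_bigr => a _; rewrite mulr_sumr; apply: eq_bigr => b _; rewrite mulrA.
Qed.

Lemma ip_sum_r (Q : A -> B -> R) x y : ip Q x y = \sum_b y b * \sum_a x a * Q a b.
Proof.
rewrite /ip exchange_big; apply: eq_bigr => b _; rewrite mulr_sumr.
by apply: eq_bigr => a _; ring.
Qed.

Lemma dist_sum_mul_bound (T : finType) (y f : T -> R) (c : R) :
  is_dist y -> (forall i, 0 <= f i <= c) -> 0 <= \sum_i y i * f i <= c.
Proof.
move=> [y0 y1] f0c; rewrite sumr_ge0 /= => [|i _]; last first.
  by rewrite mulr_ge0 //; case/andP: (f0c i).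
rewrite -[leRHS]mul1r -y1 mulr_suml; apply: ler_sum => i _.
by rewrite ler_wpM2l //; case/andP: (f0c i).
Qed.

Lemma ip_bound (Q : A -> B -> R) x y c :
  is_dist x -> is_dist y -> (forall a b, 0 <= Q a b <= c) -> 0 <= ip Q x y <= c.
Proof.
move=> hx hy Q0c; rewrite ip_sum_l; apply: dist_sum_mul_bound => // a.
exact: dist_sum_mul_bound.
Qed.

Lemma sum_sqr_le_card (T : finType) (g : T -> R) c :
  (forall i, 0 <= g i <= c) -> \sum_i g i ^+ 2 <= #|T|%:R * c ^+ 2.
Proof.
move=> g0c; apply: (@le_trans _ _ (\sum_(i : T) c ^+ 2)).
  apply: ler_sum => i _; have /andP[g0 gc] := g0c i.
  by rewrite ler_sqr ?nnegrE //; lra.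
by rewrite sumr_const mulr_natl.
Qed.

End InnerProduct.

Section GradientDescentAscent.
Variables (R : realType) (S A B : finType) (H : nat).
Variables (r : nat -> S -> A -> B -> R) (P : nat -> S -> A -> B -> S -> R).
Variables (eta : R) (mu : nat -> nat -> S -> A -> R) (nu : nat -> nat -> S -> B -> R).

Local Notation Q := (Qfun H r P mu nu).
Let payoff_mu k h s a := \sum_b nu k h s b * Q k h s a b.
Let payoff_nu k h s b := \sum_a mu k h s a * Q k h s a b.

Hypothesis r_bound : forall h s a b, (1 <= h <= H)%N -> 0 <= r h s a b <= 1.
Hypothesis P_dist : forall h s a b, (1 <= h <= H)%N ->
  (forall s', 0 <= P h s a b s') /\ \sum_s' P h s a b s' = 1.
Hypothesis eta_gt0 : 0 < eta.
Hypothesis mu_proj : forall k h s, (1 <= k)%N -> (1 <= h <= H)%N ->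
  is_proj (fun a => mu k.-1 h s a + eta * payoff_mu k.-1 h s a) (mu k h s).
Hypothesis nu_proj : forall k h s, (1 <= k)%N -> (1 <= h <= H)%N ->
  is_proj (fun b => nu k.-1 h s b - eta * payoff_nu k.-1 h s b) (nu k h s).

Lemma mu_dist k h s : (1 <= k)%N -> (1 <= h <= H)%N -> is_dist (mu k h s).
Proof. by move=> k_ge1 hh; case: (mu_proj s k_ge1 hh). Qed.

Lemma nu_dist k h s : (1 <= k)%N -> (1 <= h <= H)%N -> is_dist (nu k h s).
Proof. by move=> k_ge1 hh; case: (nu_proj s k_ge1 hh). Qed.

Lemma Qaux_bound k (Qprev : nat -> S -> A -> B -> R) : (1 <= k)%N ->
  (forall h s a b, (1 <= h <= H)%N -> 0 <= Qprev h s a b <= (H.+1 - h)%:R) ->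
  forall d s a b, (d <= H)%N -> 0 <= Qaux H r P mu nu k Qprev d s a b <= d%:R.
Proof.
move=> k_ge1 Qprev_bound; elim=> [|d IHd] s a b d_le /=; first by rewrite lexx.
have hh : (1 <= H - d <= H)%N by lia.
have next_bound s' : 0 <= ip (Qaux H r P mu nu k Qprev d s')
    (mu k (H - d).+1 s') (nu k (H - d).+1 s') <= d%:R.
  case: d IHd d_le {hh} => [|d] IHd d_le.
    by rewrite /ip big1 ?lexx // => a' _; rewrite big1 // => b' _; rewrite mulr0.
  by apply: ip_bound; [apply: mu_dist | apply: nu_dist | move=> a' b'; apply: IHd];
    lia.
have /andP[Q0 Q1] := Qprev_bound (H - d)%N s a b hh.
have /andP[r0 r1] := r_bound s a b hh.
have /andP[p0 p1] := dist_sum_mul_bound (P_dist s a b hh) next_bound.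
have a0 := alpha_ge0 R H k; have a1 := alpha_le1 R H k_ge1.
rewrite (_ : (H.+1 - (H - d))%N = d.+1) in Q1; last by lia.
rewrite -addn1 natrD in Q1 *; apply/andP; split; nra.
Qed.

Lemma Qfun_bound k h s a b : (1 <= h <= H)%N -> 0 <= Q k h s a b <= (H.+1 - h)%:R.
Proof.
elim: k h s a b => [|k IH] h s a b hh /=; first by rewrite lexx ler0n.
by apply: Qaux_bound => //; lia.
Qed.

Lemma Qfun_le_H k h s a b : (1 <= h <= H)%N -> 0 <= Q k h s a b <= H%:R.
Proof.
move=> hh; have /andP[Q0 QH] := Qfun_bound k s a b hh.
by rewrite Q0 (le_trans QH) // ler_nat; lia.
Qed.

Lemma gap_mu_le w k h s z : (1 <= k)%N -> (1 <= h <= H)%N ->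
  monotone_weights w k -> is_dist z ->
  gap_mu H r P mu nu w k h s z <= w k / eta + eta * #|A|%:R * (H ^ 2)%:R / 2.
Proof.
move=> k_ge1 hh hw hz.
have -> : gap_mu H r P mu nu w k h s z = \sum_(1 <= t < k.+1)
    w t * \sum_a payoff_mu t h s a * (z a - mu t h s a).
  rewrite /gap_mu -sumrB; apply: eq_bigr => t _.
  rewrite !ip_sum_l -mulrBr -sumrB; congr (_ * _).
  by apply: eq_bigr => a _; rewrite /payoff_mu; ring.
rewrite natrX -(mulrA eta).
apply: (weighted_projected_gradient_regret (x := fun t => mu t h s)) => //.
- by move=> t /andP[t_ge1 _]; apply: mu_dist.
- by move=> t _; exact: (mu_proj s (ltn0Sn t) hh).
- move=> t /andP[t_ge1 _]; apply: sum_sqr_le_card => a.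
  by apply: dist_sum_mul_bound => [|b]; [apply: nu_dist | apply: Qfun_le_H].
Qed.

Lemma gap_nu_le w k h s z : (1 <= k)%N -> (1 <= h <= H)%N ->
  monotone_weights w k -> is_dist z ->
  gap_nu H r P mu nu w k h s z <= w k / eta + eta * #|B|%:R * (H ^ 2)%:R / 2.
Proof.
move=> k_ge1 hh hw hz.
have -> : gap_nu H r P mu nu w k h s z = \sum_(1 <= t < k.+1)
    w t * \sum_b (- payoff_nu t h s b) * (z b - nu t h s b).
  rewrite /gap_nu -sumrB; apply: eq_bigr => t _.
  rewrite !ip_sum_r -mulrBr -sumrB; congr (_ * _).
  by apply: eq_bigr => b _; rewrite /payoff_nu; ring.
rewrite natrX -(mulrA eta).
apply: (weighted_projected_gradient_regret (x := fun t => nu t h s)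
  (y := fun t b => nu t h s b - eta * payoff_nu t h s b)) => //.
- by move=> t /andP[t_ge1 _]; apply: nu_dist.
- by move=> t _; exact: (nu_proj s (ltn0Sn t) hh).
- by move=> t b _; rewrite mulrN.
- move=> t /andP[t_ge1 _].
  under eq_bigr do rewrite sqrrN.
  apply: sum_sqr_le_card => b.
  by apply: dist_sum_mul_bound => [|a]; [apply: mu_dist | apply: Qfun_le_H].
Qed.

End GradientDescentAscent.

Lemma regret_bound_weaken (R : realFieldType) (eta u c : R) (n m : nat) :
  0 < eta -> 0 <= u -> 0 <= c -> (n <= m)%N ->
  u / eta + eta * n%:R * c / 2 <= 2 / eta * u + eta * m%:R * c / 2.
Proof.
move=> eta_gt0 u0 c0 nm.
have ue0 : 0 <= u / eta by rewrite divr_ge0 // ltW.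
have card_le : eta * n%:R * c / 2 <= eta * m%:R * c / 2.
  by rewrite ler_wpM2r ?invr_ge0 // ler_wpM2r // ler_wpM2l ?ler_nat // ltW.
rewrite (_ : 2 / eta * u = 2 * (u / eta)); last by ring.
lra.
Qed.

Theorem mainTheorem10 (R : realType) (S A B : finType) (H : nat)
  (r : nat -> S -> A -> B -> R) (P : nat -> S -> A -> B -> S -> R)
  (eta : R) (mu : nat -> nat -> S -> A -> R) (nu : nat -> nat -> S -> B -> R) :
  (1 <= H)%N ->
  (forall h s a b, (1 <= h <= H)%N -> 0 <= r h s a b <= 1) ->
  (forall h s a b, (1 <= h <= H)%N ->
     (forall s', 0 <= P h s a b s') /\ \sum_s' P h s a b s' = 1) ->
  0 < eta ->
  (forall h s a, (1 <= h <= H)%N -> mu 0%N h s a = 1 / #|A|%:R) ->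
  (forall h s b, (1 <= h <= H)%N -> nu 0%N h s b = 1 / #|B|%:R) ->
  (forall k h s, (1 <= k)%N -> (1 <= h <= H)%N ->
     is_proj
       (fun a => mu k.-1 h s a +
          eta * \sum_b nu k.-1 h s b * Qfun H r P mu nu k.-1 h s a b)
       (mu k h s)) ->
  (forall k h s, (1 <= k)%N -> (1 <= h <= H)%N ->
     is_proj
       (fun b => nu k.-1 h s b -
          eta * \sum_a mu k.-1 h s a * Qfun H r P mu nu k.-1 h s a b)
       (nu k h s)) ->
  forall k h, (1 <= k)%N -> (1 <= h <= H)%N ->
    (forall s,
      (forall z : A -> R, is_dist z ->
         gap_mu H r P mu nu (alpha_w R H k) k h s z
         <= 2 / eta * ((H.+1)%:R / (H + k)%:R)
            + eta * (maxn #|A| #|B|)%:R * (H ^ 2)%:R / 2) /\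
      (forall z : B -> R, is_dist z ->
         gap_nu H r P mu nu (alpha_w R H k) k h s z
         <= 2 / eta * ((H.+1)%:R / (H + k)%:R)
            + eta * (maxn #|A| #|B|)%:R * (H ^ 2)%:R / 2)) /\
    (forall s (z1 : A -> R) (z2 : B -> R), is_dist z1 -> is_dist z2 ->
       gap_mu H r P mu nu (fun _ => 1 / k%:R) k h s z1
       + gap_nu H r P mu nu (fun _ => 1 / k%:R) k h s z2
       <= 4 / (eta * k%:R) + eta * (#|A| + #|B|)%:R * (H ^ 2)%:R / 2).
Proof.
move=> _ r_bound P_dist eta_gt0 _ _ mu_proj nu_proj k h k_ge1 hh.
have mu_regret w s (z : A -> R) : monotone_weights w k -> is_dist z ->
    gap_mu H r P mu nu w k h s z <= w k / eta + eta * #|A|%:R * (H ^ 2)%:R / 2.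
  by apply: gap_mu_le.
have nu_regret w s (z : B -> R) : monotone_weights w k -> is_dist z ->
    gap_nu H r P mu nu w k h s z <= w k / eta + eta * #|B|%:R * (H ^ 2)%:R / 2.
  by apply: gap_nu_le.
have H2_ge0 : 0 <= (H ^ 2)%:R :> R by [].
split=> [s | s z1 z2 hz1 hz2].
- have alpha_w_k := alpha_w_monotone_weights R H k_ge1.
  split=> z hz.
  + apply: le_trans (mu_regret _ _ _ alpha_w_k hz) _.
    rewrite alpha_w_diag.
    exact: regret_bound_weaken eta_gt0 (alpha_ge0 R H k) H2_ge0 (leq_maxl _ _).
  + apply: le_trans (nu_regret _ _ _ alpha_w_k hz) _.
    rewrite alpha_w_diag.
    exact: regret_bound_weaken eta_gt0 (alpha_ge0 R H k) H2_ge0 (leq_maxr _ _).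
- have uniform_k := uniform_monotone_weights R k_ge1.
  have := mu_regret _ s _ uniform_k hz1.
  have := nu_regret _ s _ uniform_k hz2.
  have -> : 1 / k%:R / eta = 1 / (eta * k%:R) by field; rewrite !gt_eqF ?ltr0n.
  have : 0 <= 1 / (eta * k%:R) by rewrite divr_ge0 // mulr_ge0 // ltW.
  rewrite natrD mulrDr mulrDl mulrDl; lra.
Qed.
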